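(* Let $R$ be a Noetherian Banach–Tate ring with norm $|\cdot|$ and multiplicative pseudo-uniformizer $\varpi$, and assume there exists a continuous ring homomorphism $\mathbb{Z}_p\to R$. Then there exists a norm $|\cdot|'$ on $R$ such that: $(R,|\cdot|')$ is a Banach–Tate $\mathbb{Z}_p$-algebra; $|\cdot|'$ is bounded-equivalent to $|\cdot|^s$ for some real $s>0$; and $\varpi$ is a multiplicative pseudo-uniformizer for $|\cdot|'$.
   Context: Norms are non-archimedean, submultiplicative, with $|1|=1$ and $|r|=0\iff r=0$. A Banach–Tate ring is a complete normed ring containing a unit $\varpi$ with $|\varpi|<1$ and $|\varpi s|=|\varpi||s|$ for all $s$ (a multiplicative pseudo-uniformizer). A Banach–Tate $\mathbb{Z}_p$-algebra is a Banach–Tate ring $R$ together with a ring homomorphism $\mathbb{Z}_p\to R$ which is norm-decreasing for the usual $p$-adic norm $|x|_p=p^{-\mathrm{ord}_p(x)}$ on $\mathbb{Z}_p$. Two norms $|\cdot|_1,|\cdot|_2$ are bounded-equivalent if there exist $C_1,C_2>0$ with $C_1|r|_1\le|r|_2\le C_2|r|_1$ for all $r$. *)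

From HB Require Import structures.
From Stdlib Require Import Reals ZArith Znumtheory ClassicalEpsilon Lia.
From mathcomp Require Import all_boot all_order all_algebra.

Set Implicit Arguments.
Unset Strict Implicit.
Unset Printing Implicit Defensive.

(* Z_p, modelled as compatible sequences (a_n)_n with a_n in [0, p^n) *)
(* and a_{n+1} = a_n mod p^n (i.e. Z_p = lim Z/p^n Z).                *)

Local Open Scope Z_scope.

Definition is_padic (p : positive) (a : nat -> Z) : Prop :=
  forall n : nat,
    (0 <= a n < Z.pos p ^ Z.of_nat n) /\
    Z.modulo (a (S n)) (Z.pos p ^ Z.of_nat n) = a n.

Definition padicZ (p : positive) : Type := {a : nat -> Z | is_padic p a}.

Definition zp_seq (p : positive) (x : padicZ p) : nat -> Z := proj1_sig x.

Lemma ppow_pos (p : positive) (n : nat) : (0 < Z.pos p ^ Z.of_nat n).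
Proof. apply Z.pow_pos_nonneg; lia. Qed.

Lemma reduce_padic (p : positive) (b : nat -> Z) :
  (forall n, Z.modulo (b (S n)) (Z.pos p ^ Z.of_nat n)
             = Z.modulo (b n) (Z.pos p ^ Z.of_nat n)) ->
  is_padic p (fun n => Z.modulo (b n) (Z.pos p ^ Z.of_nat n)).
Proof.
move=> Hb n; split.
  by apply Z.mod_pos_bound; apply ppow_pos.
rewrite -[RHS](Hb n); symmetry; apply Zmod_div_mod; try apply ppow_pos.
exists (Z.pos p); rewrite Nat2Z.inj_succ Z.pow_succ_r; lia.
Qed.

Lemma padic_mod (p : positive) (x : padicZ p) (n : nat) :
  Z.modulo (zp_seq x (S n)) (Z.pos p ^ Z.of_nat n) = zp_seq x n.
Proof. by case: x => a Ha; case: (Ha n). Qed.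

Lemma padic_add_ok (p : positive) (x y : padicZ p) :
  is_padic p (fun n => Z.modulo (zp_seq x n + zp_seq y n) (Z.pos p ^ Z.of_nat n)).
Proof.
apply reduce_padic => n.
have H0 : (Z.pos p ^ Z.of_nat n <> 0) by have := ppow_pos p n; lia.
by rewrite Z.add_mod // !padic_mod.
Qed.

Lemma padic_mul_ok (p : positive) (x y : padicZ p) :
  is_padic p (fun n => Z.modulo (zp_seq x n * zp_seq y n) (Z.pos p ^ Z.of_nat n)).
Proof.
apply reduce_padic => n.
have H0 : (Z.pos p ^ Z.of_nat n <> 0) by have := ppow_pos p n; lia.
by rewrite Z.mul_mod // !padic_mod.
Qed.

Lemma padic_one_ok (p : positive) :
  is_padic p (fun n => Z.modulo 1 (Z.pos p ^ Z.of_nat n)).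
Proof. by apply reduce_padic. Qed.

Lemma padic_zero_ok (p : positive) :
  is_padic p (fun n => Z.modulo 0 (Z.pos p ^ Z.of_nat n)).
Proof. by apply reduce_padic. Qed.

Definition zp_add (p : positive) (x y : padicZ p) : padicZ p := exist _ _ (padic_add_ok x y).
Definition zp_mul (p : positive) (x y : padicZ p) : padicZ p := exist _ _ (padic_mul_ok x y).
Definition zp_one (p : positive) : padicZ p := exist _ _ (padic_one_ok p).
Definition zp_zero (p : positive) : padicZ p := exist _ _ (padic_zero_ok p).

(* p-adic norm |x|_p = p^(-ord_p x), with |0|_p = 0.  The residue a_n is 0
   exactly when p^n divides x, so ord_p x = (min {n | a_n <> 0}) - 1. *)
Definition zp_nonzero_at (p : positive) (x : padicZ p) : pred nat :=
  fun n => negb (Z.eqb (zp_seq x n) 0).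

Definition padic_norm (p : positive) (x : padicZ p) : R :=
  match excluded_middle_informative (exists n, zp_nonzero_at x n) with
  | left H => Rinv (IZR (Z.pos p)) ^ (ex_minn H).-1
  | right _ => IZR 0
  end.

Local Close Scope Z_scope.
Local Open Scope ring_scope.

Definition is_norm (A : comRingType) (nrm : A -> R) : Prop :=
  (forall x : A, Rle (IZR 0) (nrm x)) /\
  (forall x : A, nrm x = IZR 0 <-> x = 0) /\
  (forall x : A, nrm (- x) = nrm x) /\
  (forall x y : A, Rle (nrm (x + y)) (Rmax (nrm x) (nrm y))) /\
  (forall x y : A, Rle (nrm (x * y)) (Rmult (nrm x) (nrm y))) /\
  nrm 1 = IZR 1.

Definition is_complete (A : comRingType) (nrm : A -> R) : Prop :=
  forall u : nat -> A,
    (forall eps : R, Rlt (IZR 0) eps ->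
       exists N : nat, forall m n : nat, (N <= m)%N -> (N <= n)%N ->
         Rlt (nrm (u m - u n)) eps) ->
    exists l : A, forall eps : R, Rlt (IZR 0) eps ->
       exists N : nat, forall n : nat, (N <= n)%N -> Rlt (nrm (u n - l)) eps.

Definition is_mult_pseudo_unif (A : comRingType) (nrm : A -> R) (w : A) : Prop :=
  (exists v : A, w * v = 1) /\
  Rlt (nrm w) (IZR 1) /\
  (forall s : A, nrm (w * s) = Rmult (nrm w) (nrm s)).

Definition is_banach_tate (A : comRingType) (nrm : A -> R) (w : A) : Prop :=
  is_norm nrm /\ is_complete nrm /\ is_mult_pseudo_unif nrm w.

Definition is_ideal (A : comRingType) (I : A -> Prop) : Prop :=
  I 0 /\ (forall x y, I x -> I y -> I (x + y)) /\ (forall r x, I x -> I (r * x)).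

Definition noetherian (A : comRingType) : Prop :=
  forall I : A -> Prop, is_ideal I ->
    exists s : seq A, forall x : A,
      I x <-> exists c : 'I_(size s) -> A, x = \sum_(i < size s) c i * s`_i.

Definition zp_ring_hom (p : positive) (A : comRingType) (f : padicZ p -> A) : Prop :=
  (forall x y, f (zp_add x y) = f x + f y) /\
  (forall x y, f (zp_mul x y) = f x * f y) /\
  f (zp_one p) = 1.

(* continuity for the p-adic topology on Z_p (basic neighbourhoods of x
   are {y | y_N = x_N}) and the norm topology on A *)
Definition zp_continuous (p : positive) (A : comRingType) (nrm : A -> R)
    (f : padicZ p -> A) : Prop :=
  forall (x : padicZ p) (eps : R), Rlt (IZR 0) eps ->
    exists N : nat, forall y : padicZ p, zp_seq y N = zp_seq x N ->
      Rlt (nrm (f y - f x)) eps.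

Definition zp_norm_decreasing (p : positive) (A : comRingType) (nrm : A -> R)
    (f : padicZ p -> A) : Prop :=
  forall x : padicZ p, Rle (nrm (f x)) (padic_norm x).

Definition is_banach_tate_zp_alg (p : positive) (A : comRingType) (nrm : A -> R)
    (w : A) (f : padicZ p -> A) : Prop :=
  is_banach_tate nrm w /\ zp_ring_hom f /\ zp_norm_decreasing nrm f.

(* x^s for x >= 0 and real s > 0, with 0^s = 0 *)
Definition rpow (x s : R) : R :=
  if Req_EM_T x (IZR 0) then IZR 0 else Rpower x s.

Definition bounded_equivalent (A : Type) (n1 n2 : A -> R) : Prop :=
  exists C1 C2 : R, Rlt (IZR 0) C1 /\ Rlt (IZR 0) C2 /\
    forall r : A, Rle (Rmult C1 (n1 r)) (n2 r) /\ Rle (n2 r) (Rmult C2 (n1 r)).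

From Stdlib Require Import Reals ZArith Znumtheory.
From mathcomp Require Import all_boot all_order all_algebra.
From Stdlib Require Import Lia Lra Psatz ClassicalEpsilon FunctionalExtensionality ProofIrrelevance.

Set Implicit Arguments.
Unset Strict Implicit.
Unset Printing Implicit Defensive.
Import GRing.Theory.

(* Continuity of [f] at [0] gives [N > 0] with [|q ^ N| < 1] for [q = f p]. Replacing [|.|] by
   [|.| ^ s] for a large integer [s] achieves [|q ^ N| ^ s * p ^ N <= 1], so the weighted
   values [|q ^ n * x| ^ s * p ^ n] are bounded by a constant multiple of [|x| ^ s]. Their
   supremum [M x] satisfies [M (q * x) <= M x / p], and the operator norm
   [x |-> sup_y M (x * y) / M y] is a norm equivalent to [|.| ^ s], multiplicative at [varpi],
   with [|q ^ k| <= p ^ -k]; writing [x = p ^ k * u] then gives [|f x| <= |x|_p]. *)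

Section PadicIntegers.
Variable p : positive.
Local Open Scope Z_scope.

Lemma padic_eq (x y : padicZ p) : (forall n, zp_seq x n = zp_seq y n) -> x = y.
Proof.
case: x => a Ha; case: y => b Hb /= H.
have E : a = b by apply: functional_extensionality.
by subst b; rewrite (proof_irrelevance _ Ha Hb).
Qed.

Lemma ppow_neq0 (n : nat) : Z.pos p ^ Z.of_nat n <> 0.
Proof. have := ppow_pos p n; lia. Qed.

Definition zp_const (c : Z) : padicZ p :=
  exist _ _ (@reduce_padic p (fun _ => c) (fun n => erefl)).

Lemma zp_const_add a b : zp_add (zp_const a) (zp_const b) = zp_const (a + b).
Proof. by apply: padic_eq => n /=; rewrite -Z.add_mod //; apply: ppow_neq0. Qed.

Lemma zp_const_mul a b : zp_mul (zp_const a) (zp_const b) = zp_const (a * b).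
Proof. by apply: padic_eq => n /=; rewrite -Z.mul_mod //; apply: ppow_neq0. Qed.

Lemma zp_const1 : zp_one p = zp_const 1.
Proof. exact: padic_eq. Qed.

Lemma zp_const0 : zp_zero p = zp_const 0.
Proof. exact: padic_eq. Qed.

Lemma padic_range (x : padicZ p) n : 0 <= zp_seq x n < Z.pos p ^ Z.of_nat n.
Proof. by case: x => a Ha; case: (Ha n). Qed.

Lemma padic_mod_add (x : padicZ p) n d :
  zp_seq x (n + d)%coq_nat mod Z.pos p ^ Z.of_nat n = zp_seq x n.
Proof.
elim: d => [|d IH]; first by rewrite Nat.add_0_r Z.mod_small //; apply: padic_range.
have dvd_pow : (Z.pos p ^ Z.of_nat n | Z.pos p ^ Z.of_nat (n + d)%coq_nat)%Z.
  by exists (Z.pos p ^ Z.of_nat d); rewrite Nat2Z.inj_add Z.pow_add_r; lia.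
by rewrite Nat.add_succ_r (Zmod_div_mod _ _ _ (ppow_pos _ _) (ppow_pos _ _) dvd_pow) padic_mod.
Qed.

Section DivideByPower.
Variables (z : padicZ p) (k : nat).
Hypothesis zk0 : zp_seq z k = 0.

Lemma padic_seq_divpK m :
  zp_seq z (m + k)%coq_nat
  = Z.pos p ^ Z.of_nat k * (zp_seq z (m + k)%coq_nat / Z.pos p ^ Z.of_nat k).
Proof.
have H : zp_seq z (m + k)%coq_nat mod Z.pos p ^ Z.of_nat k = 0.
  by rewrite Nat.add_comm padic_mod_add.
have := Z_div_mod_eq_full (zp_seq z (m + k)%coq_nat) (Z.pos p ^ Z.of_nat k); lia.
Qed.

Lemma padic_div_ok :
  is_padic p (fun n => zp_seq z (n + k)%coq_nat / Z.pos p ^ Z.of_nat k).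
Proof.
have pk := ppow_pos p k; move=> n; split.
  have [H1 H2] := padic_range z (n + k)%coq_nat.
  split; first exact: Z.div_pos.
  apply: Z.div_lt_upper_bound => //.
  by move: H2; rewrite Nat2Z.inj_add Z.pow_add_r; lia.
set t := zp_seq z (S n + k)%coq_nat / Z.pos p ^ Z.of_nat k.
have E : zp_seq z (n + k)%coq_nat = Z.pos p ^ Z.of_nat k * (t mod Z.pos p ^ Z.of_nat n).
  rewrite -(padic_mod z (n + k)%coq_nat) -Nat.add_succ_l padic_seq_divpK.
  rewrite Nat2Z.inj_add Z.pow_add_r; try lia.
  by rewrite (Z.mul_comm (Z.pos p ^ Z.of_nat n)) Z.mul_mod_distr_l //; apply: ppow_neq0.
by rewrite E Z.mul_comm Z.div_mul //; apply: ppow_neq0.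
Qed.

Definition padic_div : padicZ p := exist _ _ padic_div_ok.

Lemma padic_divK : z = zp_mul (zp_const (Z.pos p ^ Z.of_nat k)) padic_div.
Proof.
apply: padic_eq => n /=.
rewrite Z.mul_mod_idemp_l; last exact: ppow_neq0.
by rewrite -padic_seq_divpK padic_mod_add.
Qed.

End DivideByPower.

Lemma padic_split (u : padicZ p) N :
  exists v, zp_seq v N = 0 /\ u = zp_add (zp_const (zp_seq u N)) v.
Proof.
have ok : is_padic p (fun n => (zp_seq u n - zp_seq u N) mod Z.pos p ^ Z.of_nat n).
  apply: reduce_padic => n; have H0 := @ppow_neq0 n.
  rewrite Zminus_mod padic_mod [RHS]Zminus_mod (Z.mod_small (zp_seq u n)) //.
  exact: padic_range.
exists (exist _ _ ok); split; first by rewrite /= Z.sub_diag Z.mod_0_l //; apply: ppow_neq0.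
apply: padic_eq => n /=; have H0 := @ppow_neq0 n.
by rewrite -Z.add_mod // Z.add_comm Z.sub_add Z.mod_small //; apply: padic_range.
Qed.

End PadicIntegers.

Local Open Scope ring_scope.
Local Open Scope R_scope.

Lemma padic_norm_cases (p : positive) (x : padicZ p) :
  x = zp_zero p \/
  exists k u, x = zp_mul (zp_const p (Z.pos p ^ Z.of_nat k)) u /\
              padic_norm x = (/ IZR (Z.pos p)) ^ k.
Proof.
rewrite /padic_norm; case: excluded_middle_informative => [H|H]; last first.
  left; apply: padic_eq => n /=; rewrite Z.mod_0_l; last exact: ppow_neq0.
  case E: (Z.eqb (zp_seq x n) 0); first exact/Z.eqb_eq.
  by case: H; exists n; rewrite /zp_nonzero_at E.
right; case: (ex_minnP H) => m Hm Hmin.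
have xm : zp_seq x m.-1 = Z0.
  case E: (Z.eqb (zp_seq x m.-1) 0); first exact/Z.eqb_eq.
  have := Hmin m.-1; rewrite /zp_nonzero_at E => /(_ isT).
  case: m Hm {Hmin H E} => [|m]; last by rewrite ltnn.
  have := padic_range x 0 => /= x0.
  by rewrite /zp_nonzero_at (_ : zp_seq x 0 = Z0) //; lia.
by exists m.-1, (padic_div xm); rewrite -padic_divK.
Qed.

Section ZpHom.
Variables (p : positive) (A : comRingType) (f : padicZ p -> A).
Hypothesis hf : zp_ring_hom f.
Local Open Scope ring_scope.

Lemma zp_hom0 : f (zp_zero p) = 0.
Proof.
have [fD _] := hf; apply: (@addrI _ (f (zp_zero p))).
by rewrite addr0 -fD zp_const0 zp_const_add.
Qed.

Lemma zp_hom_nat (m : nat) : f (zp_const p (Z.of_nat m)) = m%:R.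
Proof.
have [fD [_ f1]] := hf; elim: m => [|m IH]; first by rewrite -zp_const0 zp_hom0.
by rewrite Nat2Z.inj_succ -Z.add_1_r -zp_const_add fD IH -zp_const1 f1 -natr1.
Qed.

Lemma zp_hom_ppow (k : nat) :
  f (zp_const p (Z.pos p ^ Z.of_nat k)) = f (zp_const p (Z.pos p)) ^+ k.
Proof.
have [_ [fM f1]] := hf; elim: k => [|k IH]; first by rewrite -zp_const1 f1.
rewrite Nat2Z.inj_succ Z.pow_succ_r; last exact: Nat2Z.is_nonneg.
by rewrite -zp_const_mul fM IH exprS.
Qed.

End ZpHom.

Section NormBasics.
Variables (A : comRingType) (nrm : A -> R).
Hypothesis hn : is_norm nrm.

Lemma norm_ge0 x : 0 <= nrm x.
Proof. exact: hn.1. Qed.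

Lemma norm_eq0 x : nrm x = 0 -> x = 0%R.
Proof. exact: (proj1 (hn.2.1 x)). Qed.

Lemma norm0 : nrm 0%R = 0.
Proof. exact: (proj2 (hn.2.1 _) erefl). Qed.

Lemma normD_le x y : nrm (x + y)%R <= Rmax (nrm x) (nrm y).
Proof. exact: hn.2.2.2.1. Qed.

Lemma norm1 : nrm 1%R = 1.
Proof. exact: hn.2.2.2.2.2. Qed.

End NormBasics.

(* Junk value [0] if the range of [g] is unbounded or empty. *)
Definition rsup (T : Type) (g : T -> R) : R :=
  match excluded_middle_informative
          (bound (fun r => exists t, r = g t) /\ exists r, exists t, r = g t) with
  | left H => proj1_sig (completeness _ (proj1 H) (proj2 H))
  | right _ => 0
  end.

Section Supremum.
Variables (T : Type) (g : T -> R) (M : R).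
Hypothesis g_le : forall t, g t <= M.

Lemma rsup_ub t0 : g t0 <= rsup g.
Proof.
rewrite /rsup; case: excluded_middle_informative => [H|H].
  by case: (completeness _ _ _) => m [ub _] /=; apply: ub; exists t0.
by case: H; split; [exists M => r [t ->] | exists (g t0), t0].
Qed.

Lemma rsup_le (t0 : T) : rsup g <= M.
Proof.
rewrite /rsup; case: excluded_middle_informative => [H|H].
  by case: (completeness _ _ _) => m [_ least] /=; apply: least => r [t ->].
by case: H; split; [exists M => r [t ->] | exists (g t0), t0].
Qed.

End Supremum.

Lemma rsup_const0 (T : Type) (t0 : T) : rsup (fun _ : T => 0) = 0.
Proof.
have le0 : forall _ : T, 0 <= 0 by move=> _; apply: Rle_refl.
by apply: Rle_antisym; [apply: rsup_le le0 t0 | apply: rsup_ub le0 t0].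
Qed.

Lemma rsup_scale (T : Type) (g : T -> R) (M a : R) (t0 : T) :
  (forall t, g t <= M) -> 0 <= a -> rsup (fun t => a * g t) = a * rsup g.
Proof.
move=> gM a0; case: (Req_dec a 0) => [->|an0].
  rewrite Rmult_0_l -[RHS](rsup_const0 t0); congr rsup.
  by apply: functional_extensionality => t; rewrite Rmult_0_l.
have a_pos : 0 < a by case: (Rle_lt_or_eq_dec _ _ a0) => // E; case: an0.
have ag t : a * g t <= a * rsup g by apply: Rmult_le_compat_l => //; apply: rsup_ub gM t.
have agM t : a * g t <= a * M by apply: Rmult_le_compat_l.
apply: Rle_antisym; first exact: (rsup_le ag t0).
rewrite -(Rmult_1_l (rsup (fun t => a * g t))) -(Rinv_r a an0) Rmult_assoc.
apply: Rmult_le_compat_l => //; apply: (rsup_le _ t0) => t.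
rewrite -(Rmult_1_l (g t)) -(Rinv_l a an0) Rmult_assoc.
apply: Rmult_le_compat_l; first exact/Rlt_le/Rinv_0_lt_compat.
exact: rsup_ub agM t.
Qed.

Lemma pow_le_self (x : R) (s : nat) : 0 <= x <= 1 -> (0 < s)%N -> x ^ s <= x.
Proof.
move=> [x0 x1]; case: s => [//|k] _ /=.
have : x ^ k <= 1 by rewrite -(pow1 k); apply: pow_incr.
have := pow_le x k x0; nra.
Qed.

Lemma pow_Rmax (u v : R) (s : nat) :
  0 <= u -> 0 <= v -> Rmax u v ^ s = Rmax (u ^ s) (v ^ s).
Proof.
move=> u0 v0; rewrite /Rmax.
case: Rle_dec => uv; case: Rle_dec => // uvs.
- by case: uvs; apply: pow_incr; lra.
- suff : v ^ s <= u ^ s by lra.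
  by apply: pow_incr; lra.
Qed.

Lemma exists_pow_small (a B : R) :
  0 <= a < 1 -> 0 < B -> exists s, (0 < s)%N /\ a ^ s * B <= 1.
Proof.
move=> [a0 a1] B0; set r := Rmax a (/ 2).
have r0 : 0 < r by apply: Rlt_le_trans (Rmax_r _ _); lra.
have r1 : r < 1 by apply: Rmax_lub_lt; lra.
have [S HS] := pow_lt_1_zero r ltac:(rewrite Rabs_right; lra) (/ B)
  ltac:(exact: Rinv_0_lt_compat).
exists S.+1; split => //.
have e1 : a ^ S.+1 <= r ^ S.+1 by apply: pow_incr; split; [|apply: Rmax_l].
have : r ^ S.+1 < / B.
  by have := HS S.+1 (le_S _ _ (le_n S)); rewrite Rabs_right //; apply/Rle_ge/pow_le; lra.
have := Rinv_l B ltac:(lra); nra.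
Qed.

Lemma is_complete_uniform (A : comRingType) (n1 n2 : A -> R) :
  (forall e, 0 < e -> exists d, 0 < d /\ forall x, n2 x < d -> n1 x < e) ->
  (forall e, 0 < e -> exists d, 0 < d /\ forall x, n1 x < d -> n2 x < e) ->
  is_complete n1 -> is_complete n2.
Proof.
move=> n21 n12 hc u u_cauchy.
have [l ul] : exists l, forall e, 0 < e ->
    exists N, forall n, (N <= n)%N -> n1 (u n - l)%R < e.
  apply: hc => e /n21 [d [d0 hd]].
  by have [N HN] := u_cauchy d d0; exists N => m n hm hn; apply/hd/HN.
exists l => e /n12 [d [d0 hd]].
by have [N HN] := ul d d0; exists N => n hn; apply/hd/HN.
Qed.

Lemma is_complete_bounded_equiv (A : comRingType) (n1 n2 : A -> R) :
  bounded_equivalent n1 n2 -> is_complete n1 -> is_complete n2.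
Proof.
move=> [C1 [C2 [C1_0 [C2_0 hC]]]]; apply: is_complete_uniform => e e0.
  exists (C1 * e); split=> [|x]; first exact: Rmult_lt_0_compat.
  by have [le1 _] := hC x; nra.
exists (e / C2); split=> [|x]; first exact: Rdiv_lt_0_compat.
have [_ le2] := hC x; have := Rinv_r C2 ltac:(lra); rewrite /Rdiv.
have := Rinv_0_lt_compat C2 C2_0; nra.
Qed.

Section NormPower.
Variables (A : comRingType) (nrm : A -> R) (s : nat).
Hypotheses (hn : is_norm nrm) (s_gt0 : (0 < s)%N).

Lemma is_norm_pow : is_norm (fun x => nrm x ^ s).
Proof.
have [n0 [nz [nN [nD [nM n1]]]]] := hn.
split; first by move=> x; apply: pow_le.
split.
  move=> x; split=> [H|->]; last by rewrite (norm0 hn) pow_i //; apply/ltP.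
  by apply/nz; case: (Req_dec (nrm x) 0) => // /(pow_nonzero _ s).
split; first by move=> x; rewrite nN.
split; first by move=> x y; rewrite -pow_Rmax //; apply: pow_incr.
split; first by move=> x y; rewrite -Rpow_mult_distr; apply: pow_incr.
by rewrite n1 pow1.
Qed.

Lemma is_complete_pow : is_complete nrm -> is_complete (fun x => nrm x ^ s).
Proof.
have [n0 _] := hn; apply: is_complete_uniform => e e0.
  exists (e ^ s); split=> [|x xe]; first exact: pow_lt.
  case: (Rlt_le_dec (nrm x) e) => // ex.
  by have := pow_incr e (nrm x) s ltac:(lra); lra.
exists (Rmin e 1); split=> [|x xe]; first by apply: Rmin_glb_lt; lra.
have := Rmin_l e 1; have := Rmin_r e 1 => m1 me.
by have := pow_le_self (conj (n0 x) (Rlt_le _ _ (Rlt_le_trans _ _ _ xe m1))) s_gt0; lra.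
Qed.

End NormPower.

Lemma is_banach_tate_pow (A : comRingType) (nrm : A -> R) (w : A) (s : nat) :
  is_banach_tate nrm w -> (0 < s)%N -> is_banach_tate (fun x => nrm x ^ s) w.
Proof.
move=> [hn [hc [w_unit [w_lt1 w_mult]]]] s0.
split; first exact: is_norm_pow hn s0.
split; first exact: is_complete_pow hn s0 hc.
split=> //; split=> [|y]; last by rewrite w_mult Rpow_mult_distr.
by have := pow_le_self (conj (norm_ge0 hn w) (Rlt_le _ _ w_lt1)) s0; lra.
Qed.

Section ScaledNorm.
Variables (A : comRingType) (nrm : A -> R) (q : A) (c K : R).
Hypotheses (hn : is_norm nrm) (c_ge1 : 1 <= c)
  (q_bound : forall n, nrm (q ^+ n) * c ^ n <= K).

Definition scaled_norm (x : A) : R := rsup (fun n : nat => nrm (q ^+ n * x)%R * c ^ n).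

Lemma scaled_term_le x n : nrm (q ^+ n * x)%R * c ^ n <= K * nrm x.
Proof.
have [n0 [_ [_ [_ [nM _]]]]] := hn.
have := nM (q ^+ n) x; have := q_bound n; have := n0 x; have := n0 (q ^+ n * x)%R.
have := pow_le c n ltac:(lra); have := n0 (q ^+ n); nra.
Qed.

Lemma scaled_norm_ub x n : nrm (q ^+ n * x)%R * c ^ n <= scaled_norm x.
Proof. exact: rsup_ub (scaled_term_le x) n. Qed.

Lemma scaled_norm_le_of x M :
  (forall n, nrm (q ^+ n * x)%R * c ^ n <= M) -> scaled_norm x <= M.
Proof. by move=> xM; apply: rsup_le xM 0%N. Qed.

Lemma scaled_norm_ge x : nrm x <= scaled_norm x.
Proof. by have := scaled_norm_ub x 0; rewrite expr0 mul1r /= Rmult_1_r. Qed.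

Lemma scaled_normN x : scaled_norm (- x) = scaled_norm x.
Proof.
have [_ [_ [nN _]]] := hn; congr rsup; apply: functional_extensionality => n.
by rewrite mulrN nN.
Qed.

Lemma scaled_normD x y :
  scaled_norm (x + y) <= Rmax (scaled_norm x) (scaled_norm y).
Proof.
have [_ [_ [_ [nD _]]]] := hn; apply: scaled_norm_le_of => n.
have cn := pow_le c n ltac:(lra).
rewrite mulrDr; apply: Rle_trans (Rmult_le_compat_r _ _ _ cn (nD _ _)) _.
rewrite Rmult_comm -RmaxRmult // !(Rmult_comm (c ^ n)).
apply: Rle_trans (Rle_max_compat_r _ _ _ (scaled_norm_ub _ _)) _.
exact/Rle_max_compat_l/scaled_norm_ub.
Qed.

Lemma scaled_normMl x y : scaled_norm (x * y) <= nrm x * scaled_norm y.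
Proof.
have [n0 [_ [_ [_ [nM _]]]]] := hn; apply: scaled_norm_le_of => n.
have cn := pow_le c n ltac:(lra).
rewrite mulrCA; apply: Rle_trans (Rmult_le_compat_r _ _ _ cn (nM _ _)) _.
by rewrite Rmult_assoc; apply/Rmult_le_compat_l/scaled_norm_ub.
Qed.

Lemma scaled_normMq x : scaled_norm (q * x) <= scaled_norm x / c.
Proof.
apply: scaled_norm_le_of => n; have := scaled_norm_ub x n.+1.
rewrite exprS -mulrA /= [(q * (_ * x))%R]mulrCA => ub.
rewrite /Rdiv; apply: (Rmult_le_reg_r c); first lra.
have -> : scaled_norm x * / c * c = scaled_norm x by field; lra.
by rewrite Rmult_assoc (Rmult_comm (c ^ n)).
Qed.

Lemma scaled_normMw w x :
  (forall y, nrm (w * y) = nrm w * nrm y) -> scaled_norm (w * x) = nrm w * scaled_norm x.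
Proof.
move=> w_mult; rewrite -(rsup_scale 0%N (scaled_term_le x) (norm_ge0 hn w)).
congr rsup; apply: functional_extensionality => n.
by rewrite mulrCA w_mult Rmult_assoc.
Qed.

End ScaledNorm.

Section OperatorNorm.
Variables (A : comRingType) (nrm N : A -> R).
Hypotheses (hn : is_norm nrm) (N_ge : forall x, nrm x <= N x)
  (ND : forall x y, N (x + y) <= Rmax (N x) (N y))
  (NN : forall x, N (- x) = N x)
  (NMl : forall x y, N (x * y) <= nrm x * N y).

(* [N 1] may exceed [1]; the operator norm of multiplication restores [|1| = 1]. Where
   [N y = 0] also [N (x * y) = 0], so the junk value [_ / 0 = 0] loses nothing. *)
Definition op_norm (x : A) : R := rsup (fun y => N (x * y)%R / N y).

Lemma N_ge0 x : 0 <= N x.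
Proof. exact: Rle_trans (norm_ge0 hn x) (N_ge x). Qed.

Lemma op_ratio_le x y : N (x * y)%R / N y <= nrm x.
Proof.
case: (Req_dec (N y) 0) => [->|Ny0].
  by rewrite /Rdiv Rinv_0 Rmult_0_r; exact: norm_ge0.
have Ny : 0 < N y by have := N_ge0 y; lra.
apply: (Rmult_le_reg_r (N y)) => //.
by have -> : N (x * y)%R / N y * N y = N (x * y)%R by field.
Qed.

Lemma op_norm_ub x y : N (x * y)%R / N y <= op_norm x.
Proof. exact: rsup_ub (op_ratio_le x) y. Qed.

Lemma op_norm_le x : op_norm x <= nrm x.
Proof. exact: rsup_le (op_ratio_le x) 1%R. Qed.

Lemma N1_gt0 : 0 < N 1%R.
Proof. by have := N_ge 1%R; rewrite (norm1 hn); lra. Qed.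

Lemma op_norm_ge0 x : 0 <= op_norm x.
Proof.
apply: Rle_trans (op_norm_ub x 1%R); apply: Rmult_le_pos; first exact: N_ge0.
exact/Rlt_le/Rinv_0_lt_compat/N1_gt0.
Qed.

Lemma op_norm_mul_le x y : N (x * y)%R <= op_norm x * N y.
Proof.
case: (Req_dec (N y) 0) => [Ny0|Ny0].
  by have := NMl x y; rewrite Ny0 Rmult_0_r; have := N_ge0 (x * y)%R; lra.
have Ny : 0 < N y by have := N_ge0 y; lra.
have := op_norm_ub x y; rewrite /Rdiv => ub.
have -> : N (x * y)%R = N (x * y)%R * / N y * N y by field.
exact: Rmult_le_compat_r (Rlt_le _ _ Ny) ub.
Qed.

Lemma op_norm_le_of x M : 0 <= M -> (forall y, N (x * y)%R <= M * N y) -> op_norm x <= M.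
Proof.
move=> M0 xM; apply: (rsup_le _ 1%R) => y.
case: (Req_dec (N y) 0) => [->|Ny0]; first by rewrite /Rdiv Rinv_0 Rmult_0_r.
have Ny : 0 < N y by have := N_ge0 y; lra.
apply: (Rmult_le_reg_r (N y)) => //.
by have -> : N (x * y)%R / N y * N y = N (x * y)%R by field.
Qed.

Lemma op_norm_lower x : nrm x <= N 1%R * op_norm x.
Proof.
by apply: Rle_trans (N_ge x) _; have := op_norm_mul_le x 1%R; rewrite mulr1 Rmult_comm.
Qed.

Lemma op_norm1 : op_norm 1%R = 1.
Proof.
apply: Rle_antisym.
  by apply: op_norm_le_of => [|y]; rewrite ?mul1r; lra.
have := op_norm_ub 1%R 1%R; rewrite mulr1 /Rdiv Rinv_r //.
by have := N1_gt0; lra.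
Qed.

Lemma op_normD x y : op_norm (x + y) <= Rmax (op_norm x) (op_norm y).
Proof.
apply: op_norm_le_of => [|z]; first exact: Rle_trans (op_norm_ge0 x) (Rmax_l _ _).
rewrite mulrDl Rmult_comm -RmaxRmult; last exact: N_ge0.
apply: Rle_trans (ND _ _) _; rewrite !(Rmult_comm (N z)).
apply: Rle_trans (Rle_max_compat_r _ _ _ (op_norm_mul_le _ _)) _.
exact/Rle_max_compat_l/op_norm_mul_le.
Qed.

Lemma op_normM x y : op_norm (x * y) <= op_norm x * op_norm y.
Proof.
apply: op_norm_le_of => [|z]; first exact: Rmult_le_pos (op_norm_ge0 _) (op_norm_ge0 _).
rewrite -mulrA; apply: Rle_trans (op_norm_mul_le _ _) _; rewrite Rmult_assoc.
exact: Rmult_le_compat_l (op_norm_ge0 _) (op_norm_mul_le _ _).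
Qed.

Lemma op_norm_eq0 x : op_norm x = 0 <-> x = 0%R.
Proof.
split=> [x0|->].
  by apply/(norm_eq0 hn)/Rle_antisym; [have := op_norm_lower x; rewrite x0 Rmult_0_r | apply: norm_ge0].
by apply: Rle_antisym (op_norm_ge0 _); have := op_norm_le 0%R; rewrite (norm0 hn).
Qed.

Lemma is_norm_op_norm : is_norm op_norm.
Proof.
split; first exact: op_norm_ge0.
split; first exact: op_norm_eq0.
split; first by move=> x; congr rsup; apply: functional_extensionality => y; rewrite mulNr NN.
by split; [exact: op_normD | split; [exact: op_normM | exact: op_norm1]].
Qed.

Lemma op_norm_bounded_equiv : bounded_equivalent nrm op_norm.
Proof.
exists (/ N 1%R), 1; split; first exact/Rinv_0_lt_compat/N1_gt0.
split=> [|x]; first lra.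
split; last by rewrite Rmult_1_l; apply: op_norm_le.
have := op_norm_lower x; have := N1_gt0 => N1 low.
apply: (Rmult_le_reg_l (N 1%R)) => //.
by rewrite -Rmult_assoc Rinv_r ?Rmult_1_l //; lra.
Qed.

Lemma op_normMw w x :
  (forall y, N (w * y)%R = nrm w * N y) -> op_norm (w * x) = nrm w * op_norm x.
Proof.
move=> w_mult; rewrite -(rsup_scale 1%R (op_ratio_le x) (norm_ge0 hn w)).
congr rsup; apply: functional_extensionality => y.
by rewrite -mulrA w_mult /Rdiv Rmult_assoc.
Qed.

Lemma op_normMq q c x :
  0 < c -> (forall y, N (q * y)%R <= N y / c) -> op_norm (q * x) <= op_norm x / c.
Proof.
move=> c0 q_contr; have ic := Rinv_0_lt_compat c c0.
apply: op_norm_le_of => [|y]; first exact: Rmult_le_pos (op_norm_ge0 x) (Rlt_le _ _ ic).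
rewrite -mulrA; apply: Rle_trans (q_contr _) _; rewrite /Rdiv Rmult_assoc (Rmult_comm (/ c)) -Rmult_assoc.
exact: Rmult_le_compat_r (Rlt_le _ _ ic) (op_norm_mul_le _ _).
Qed.

Lemma op_norm_exp_le q c :
  0 < c -> (forall y, N (q * y)%R <= N y / c) -> forall k, op_norm (q ^+ k) <= (/ c) ^ k.
Proof.
move=> c0 q_contr; elim=> [|k IH]; first by rewrite expr0 op_norm1; apply: Rle_refl.
rewrite exprS; apply: Rle_trans (op_normMq _ c0 q_contr) _.
rewrite /= /Rdiv Rmult_comm; apply: Rmult_le_compat_l IH.
exact/Rlt_le/Rinv_0_lt_compat.
Qed.

End OperatorNorm.

Lemma norm_exp_le (A : comRingType) (nrm : A -> R) (x : A) n :
  is_norm nrm -> nrm (x ^+ n) <= nrm x ^ n.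
Proof.
move=> [n0 [_ [_ [_ [nM n1]]]]]; elim: n => [|n IH]; first by rewrite expr0 n1 /=; lra.
by rewrite exprS /=; apply: Rle_trans (nM _ _) _; apply: Rmult_le_compat_l.
Qed.

(* The weights decay along multiples of [N], so the first [N] of them bound all. *)
Lemma weighted_pow_bound (A : comRingType) (nrm : A -> R) (q : A) (c : R) (N : nat) :
  is_norm nrm -> 1 <= c -> (0 < N)%N -> nrm (q ^+ N) * c ^ N <= 1 ->
  forall n, nrm (q ^+ n) * c ^ n <= Rmax 1 (nrm q) ^ N * c ^ N.
Proof.
move=> hn c1 N0 qN; have [n0 [_ [_ [_ [nM _]]]]] := hn.
have cpos k : 0 <= c ^ k by apply: pow_le; lra.
elim/ltn_ind => n IH; case: (ltnP n N) => nN.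
  have m1 : 1 <= Rmax 1 (nrm q) := Rmax_l _ _.
  have nN' : (n <= N)%coq_nat by apply/leP/ltnW.
  apply: Rmult_le_compat; [exact: n0 | exact: cpos | | exact: Rle_pow].
  apply: Rle_trans (norm_exp_le _ _ hn) _.
  apply: Rle_trans (_ : Rmax 1 (nrm q) ^ n <= _); first by apply: pow_incr; split; [|apply: Rmax_r].
  exact: Rle_pow.
have -> : n = (N + (n - N))%N by rewrite subnKC.
rewrite exprD pow_add.
have IHr := IH (n - N)%N ltac:(by rewrite ltn_subrL N0 (leq_trans N0 nN)).
apply: Rle_trans (Rmult_le_compat_r _ _ _ (Rmult_le_pos _ _ (cpos N) (cpos _)) (nM _ _)) _.
rewrite (_ : _ * _ * _ = nrm (q ^+ N) * c ^ N * (nrm (q ^+ (n - N)) * c ^ (n - N))); last by ring.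
apply: Rle_trans IHr; rewrite -[X in _ <= X]Rmult_1_l.
exact: Rmult_le_compat_r (Rmult_le_pos _ _ (n0 _) (cpos _)) qN.
Qed.

Lemma norm_natr_le1 (A : comRingType) (nrm : A -> R) (m : nat) :
  is_norm nrm -> nrm (m%:R : A) <= 1.
Proof.
move=> hn; elim: m => [|m IH].
  by rewrite (norm0 hn); lra.
by rewrite -natr1; apply: Rle_trans (normD_le hn _ _) _; apply: Rmax_lub; rewrite ?(norm1 hn); lra.
Qed.

Section ZpAlgebraNorms.
Variables (p : positive) (A : comRingType) (f : padicZ p -> A).
Hypothesis hf : zp_ring_hom f.

Lemma zp_continuous_contract (nrm : A -> R) :
  is_norm nrm -> zp_continuous nrm f ->
  (forall u, nrm (f u) <= 1) /\
  exists N, (0 < N)%N /\ nrm (f (zp_const p (Z.pos p)) ^+ N) < 1.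
Proof.
move=> hn hfc; have [N HN] := hfc (zp_zero p) 1 Rlt_0_1.
have small y : zp_seq y N = Z0 -> nrm (f y) < 1.
  move=> yN; have := HN y; rewrite zp_hom0 // subr0; apply.
  by rewrite yN /= Z.mod_0_l //; apply: ppow_neq0.
have qN : nrm (f (zp_const p (Z.pos p)) ^+ N) < 1.
  by rewrite -zp_hom_ppow //; apply: small; rewrite /= Z_mod_same_full.
split; last first.
  exists N; split => //; case: N {HN small} qN => // .
  by rewrite expr0 (norm1 hn); lra.
move=> u; have [v [vN ->]] := padic_split u N; have [fD _] := hf.
rewrite fD; apply: Rle_trans (normD_le hn _ _) _; apply: Rmax_lub; last first.
  by apply: Rlt_le; apply: small.
have [u0 _] := padic_range u N.
by rewrite -(Z2Nat.id (zp_seq u N)) // zp_hom_nat //; apply: norm_natr_le1.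
Qed.

Lemma zp_norm_decreasing_of (nrm : A -> R) :
  is_norm nrm -> (forall u, nrm (f u) <= 1) ->
  (forall k, nrm (f (zp_const p (Z.pos p)) ^+ k) <= (/ IZR (Z.pos p)) ^ k) ->
  zp_norm_decreasing nrm f.
Proof.
move=> hn f_le1 q_le x; have [n0 [_ [_ [_ [nM _]]]]] := hn.
case: (padic_norm_cases x) => [->|[k [u [-> ->]]]].
  rewrite zp_hom0 // (norm0 hn) /padic_norm.
  case: excluded_middle_informative => H; last exact: Rle_refl.
  by apply/pow_le/Rlt_le/Rinv_0_lt_compat/IZR_lt.
have [_ [fM _]] := hf; rewrite fM zp_hom_ppow //.
apply: Rle_trans (nM _ _) _; rewrite -[X in _ <= X]Rmult_1_r.
exact: Rmult_le_compat (n0 _) (n0 _) (q_le k) (f_le1 u).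
Qed.

End ZpAlgebraNorms.

Lemma rpow_nat (x : R) (s : nat) : 0 <= x -> (0 < s)%N -> rpow x (INR s) = x ^ s.
Proof.
move=> x0 s0; rewrite /rpow; case: Req_EM_T => [x_0|xn0] /=.
  by rewrite x_0 pow_i //; apply/ltP.
by rewrite Rpower_pow //; lra.
Qed.

Lemma rescaled_banach_tate_zp_alg (p : positive) (A : comRingType) (f : padicZ p -> A)
    (nrm : A -> R) (w : A) (K : R) :
  zp_ring_hom f -> is_banach_tate nrm w -> (forall u, nrm (f u) <= 1) ->
  (forall n, nrm (f (zp_const p (Z.pos p)) ^+ n) * IZR (Z.pos p) ^ n <= K) ->
  exists nrm', is_banach_tate_zp_alg nrm' w f /\ bounded_equivalent nrm nrm'.
Proof.
move=> hf [hn [hc [w_unit [w_lt1 w_mult]]]] f_le1 q_bound.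
set q := f _ in q_bound; set c := IZR (Z.pos p) in q_bound *.
have c1 : 1 <= c by apply: IZR_le; lia.
have N_ge := scaled_norm_ge hn c1 q_bound.
have NMl := scaled_normMl hn c1 q_bound.
have ND := scaled_normD hn c1 q_bound.
have NN := scaled_normN q c hn.
set N := scaled_norm nrm q c in N_ge NMl ND NN *.
have op_w y : op_norm N (w * y) = nrm w * op_norm N y.
  by apply: op_normMw => // z; apply: scaled_normMw.
have op_is_norm := is_norm_op_norm hn N_ge ND NN NMl.
have op_eqv := op_norm_bounded_equiv hn N_ge NMl.
have op_w1 : op_norm N w = nrm w.
  by have := op_w 1%R; rewrite mulr1 (op_norm1 hn N_ge NMl) Rmult_1_r.
exists (op_norm N); split=> //; split; [|split=> //].
  split=> //; split; first exact: is_complete_bounded_equiv op_eqv hc.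
  by split=> //; rewrite op_w1.
apply: zp_norm_decreasing_of => // [u|].
- exact: Rle_trans (op_norm_le hn N_ge NMl _) (f_le1 u).
- have c0 : 0 < c by lra.
  by have := op_norm_exp_le hn N_ge NMl c0 (scaled_normMq hn c1 q_bound).
Qed.

Theorem mainTheorem3 (p : positive) (hp : Znumtheory.prime (Z.pos p))
  (A : comRingType) (nrm : A -> R) (w : A)
  (hBT : is_banach_tate nrm w) (hN : noetherian A)
  (f : padicZ p -> A) (hf : zp_ring_hom f) (hfc : zp_continuous nrm f) :
  exists nrm' : A -> R,
    is_banach_tate_zp_alg nrm' w f /\
    exists s : R, Rlt (IZR 0) s /\
      bounded_equivalent (fun r => rpow (nrm r) s) nrm'.
Proof.
have hn := hBT.1; set q := f (zp_const p (Z.pos p)); set c := IZR (Z.pos p).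
have c1 : 1 <= c by apply: IZR_le; lia.
have [f_le1 [N [N0 qN]]] := zp_continuous_contract hf hn hfc.
have [s [s0 qs]] := exists_pow_small (conj (norm_ge0 hn _) qN) (pow_lt c N ltac:(lra)).
have hBTs := is_banach_tate_pow hBT s0.
have q_bound := weighted_pow_bound hBTs.1 c1 N0 (_ : nrm (q ^+ N) ^ s * c ^ N <= 1).
have fs_le1 u : nrm (f u) ^ s <= 1 by rewrite -(pow1 s); apply: pow_incr; split; [exact: norm_ge0 |].
have [nrm' [alg eqv]] := rescaled_banach_tate_zp_alg hf hBTs fs_le1 (q_bound qs).
exists nrm'; split=> //; exists (INR s); split; first exact/lt_0_INR/ltP.
suff -> : (fun r => rpow (nrm r) (INR s)) = (fun r => nrm r ^ s) by [].
by apply: functional_extensionality => r; apply: rpow_nat; [exact: norm_ge0 |].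
Qed.
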